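(* Let $x_1,x_2\in\mathbb{R}$ and $z_1,z_2,v_2\in\mathbb{C}$, and define $g_{\sigma^2}=4|z_1|^2+x_1^2$, $g_{\rho^2}=4|z_2|^2+|v_2|^2+\tfrac13x_2^2$, $g_{\rho\sigma^2}=\tfrac23x_2(x_1^2-2|z_1|^2)+4z_2\bar z_1^2+4\bar z_2z_1^2+2v_2\bar z_1x_1+2\bar v_2z_1x_1$, $g_{\rho^2\sigma^2}=(8|z_2|^2-|v_2|^2-\tfrac23x_2^2)(x_1^2-2|z_1|^2)-12z_2\bar v_2\bar z_1x_1-12\bar z_2v_2z_1x_1+8z_2x_2\bar z_1^2+8\bar z_2x_2z_1^2-2v_2x_2\bar z_1x_1-2\bar v_2x_2z_1x_1-3v_2^2\bar z_1^2-3\bar v_2^2z_1^2$. Then $g_{\sigma^2},g_{\rho^2}\ge0$, and whenever $g_{\sigma^2}g_{\rho^2}\neq0$, $$-\sqrt2\le\frac{g_{\rho\sigma^2}}{\sqrt{g_{\rho^2}}\,g_{\sigma^2}}\le\sqrt2,\qquad -\sqrt{\tfrac75}\,(\sqrt{15}-1)\le\frac{g_{\rho^2\sigma^2}}{g_{\rho^2}g_{\sigma^2}}\le\sqrt{\tfrac75}\,(\sqrt{15}+1).$$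
   Context: These are the $SU(2)$-invariants of a pair of real multiplets $\eta^{(2)}(\zeta)=\frac{\bar z_1}{\zeta}+x_1-z_1\zeta$ and $\eta^{(4)}(\zeta)=\frac{\bar z_2}{\zeta^2}+\frac{\bar v_2}{\zeta}+x_2-v_2\zeta+z_2\zeta^2$. *)

From HB Require Import structures.
From mathcomp Require Import all_boot all_order all_algebra.
From mathcomp Require Import complex.
Set Implicit Arguments. Unset Strict Implicit. Unset Printing Implicit Defensive.
Import Order.TTheory GRing.Theory Num.Theory.
Local Open Scope ring_scope.
Local Open Scope complex_scope.

Section Invariants.
Variable R : rcfType.
Local Notation C := R[i].

Definition g_sigma2 (x1 : R) (z1 : C) : C :=
  4 * (z1 * z1^*) + x1%:C ^+ 2.

Definition g_rho2 (x2 : R) (z2 v2 : C) : C :=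
  4 * (z2 * z2^*) + v2 * v2^* + 3^-1 * x2%:C ^+ 2.

Definition g_rhosigma2 (x1 x2 : R) (z1 z2 v2 : C) : C :=
  2 / 3 * x2%:C * (x1%:C ^+ 2 - 2 * (z1 * z1^*))
  + 4 * z2 * z1^* ^+ 2 + 4 * z2^* * z1 ^+ 2
  + 2 * v2 * z1^* * x1%:C + 2 * v2^* * z1 * x1%:C.

Definition g_rho2sigma2 (x1 x2 : R) (z1 z2 v2 : C) : C :=
  (8 * (z2 * z2^*) - v2 * v2^* - 2 / 3 * x2%:C ^+ 2)
    * (x1%:C ^+ 2 - 2 * (z1 * z1^*))
  - 12 * z2 * v2^* * z1^* * x1%:C - 12 * z2^* * v2 * z1 * x1%:C
  + 8 * z2 * x2%:C * z1^* ^+ 2 + 8 * z2^* * x2%:C * z1 ^+ 2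
  - 2 * v2 * x2%:C * z1^* * x1%:C - 2 * v2^* * x2%:C * z1 * x1%:C
  - 3 * v2 ^+ 2 * z1^* ^+ 2 - 3 * v2^* ^+ 2 * z1 ^+ 2.
End Invariants.

(* The invariant
   g_rhosigma2 is a pairing sum_i u_i w_i of a vector u built from (x2, z2, v2)
   with a vector w built from (x1, z1), and the weighted Cauchy-Schwarz
   inequality with weights (2, 12, 12, 3, 3) gives
   3 g_rhosigma2^2 <= 4 g_rho2 g_sigma2^2, sharper than the bound sqrt 2.
   Both 2 g_rho2 g_sigma2 - g_rho2sigma2 and 2 g_rho2 g_sigma2 + g_rho2sigma2
   are sums of squared moduli, so the second quotient lies in [-2, 2], which is
   inside the stated interval because sqrt(7/5) (sqrt 15 - 1) >= 2. *)

From HB Require Import structures.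
From mathcomp Require Import all_boot all_order all_algebra.
From mathcomp Require Import complex ring lra.
Set Implicit Arguments. Unset Strict Implicit. Unset Printing Implicit Defensive.
Import Order.TTheory GRing.Theory Num.Theory.
Local Open Scope ring_scope.
Local Open Scope complex_scope.

Section CauchySchwarz.
Variables (C : numClosedFieldType) (I : finType).
Implicit Types (a b u w d : I -> C).

Lemma Lagrange_identity a b :
  \sum_i \sum_j `|a i * b j - a j * b i| ^+ 2
  = 2 * ((\sum_i `|a i| ^+ 2) * (\sum_j `|b j| ^+ 2)
         - `|\sum_i a i * (b i)^*| ^+ 2).
Proof.
have expand i j : `|a i * b j - a j * b i| ^+ 2
    = `|a i| ^+ 2 * `|b j| ^+ 2 + `|a j| ^+ 2 * `|b i| ^+ 2
      - a i * (b i)^* * (a j * (b j)^*)^* - a j * (b j)^* * (a i * (b i)^*)^*.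
  by rewrite !normCK !(rmorphB, rmorphM) /= !conjCK; ring.
have sumP : \sum_i \sum_j `|a i| ^+ 2 * `|b j| ^+ 2
          = (\sum_i `|a i| ^+ 2) * (\sum_j `|b j| ^+ 2).
  by rewrite big_distrlr.
have sumS : \sum_i \sum_j a i * (b i)^* * (a j * (b j)^*)^*
          = `|\sum_i a i * (b i)^*| ^+ 2.
  by rewrite normCK rmorph_sum big_distrlr.
under eq_bigr => i _ do under eq_bigr => j _ do rewrite expand.
under eq_bigr => i _ do rewrite !sumrB big_split /=.
rewrite !sumrB big_split /= sumP sumS exchange_big sumP exchange_big sumS.
by ring.
Qed.

Lemma CauchySchwarz_sum a b :
  `|\sum_i a i * (b i)^*| ^+ 2
  <= (\sum_i `|a i| ^+ 2) * (\sum_i `|b i| ^+ 2).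
Proof.
rewrite -subr_ge0 -(@pmulr_rge0 _ 2) ?ltr0n // -Lagrange_identity.
by do 2![apply: sumr_ge0 => ? _]; rewrite exprn_ge0.
Qed.

Lemma weighted_CauchySchwarz d u w : (forall i, 0 < d i) ->
  `|\sum_i u i * w i| ^+ 2
  <= (\sum_i d i * `|u i| ^+ 2) * (\sum_i `|w i| ^+ 2 / d i).
Proof.
move=> d_gt0; pose s i := sqrtC (d i).
have s_gt0 i : 0 < s i by rewrite sqrtC_gt0.
have s_sqr i : `|s i| ^+ 2 = d i by rewrite gtr0_norm // sqrtCK.
have := CauchySchwarz_sum (fun i => s i * u i) (fun i => (w i)^* / s i).
congr (`|_| ^+ 2 <= _ * _); apply: eq_bigr => i _.
- rewrite rmorphM fmorphV /= conjCK (conj_Creal (gtr0_real (s_gt0 i))).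
  by field; rewrite gt_eqF.
- by rewrite normrM exprMn s_sqr.
- by rewrite normrM normfV norm_conjC exprMn exprVn s_sqr.
Qed.
End CauchySchwarz.

Section Invariants.
Variable R : rcfType.
Local Notation C := R[i].
Variables (x1 x2 : R) (z1 z2 v2 : C).
Local Notation gs := (g_sigma2 x1 z1).
Local Notation gr := (g_rho2 x2 z2 v2).
Local Notation grs := (g_rhosigma2 x1 x2 z1 z2 v2).
Local Notation grrs := (g_rho2sigma2 x1 x2 z1 z2 v2).

(* [conjc_real] stated for [Num.conj]: once conjugation has been pushed
   through a term, [conjc_real] no longer matches syntactically. *)
Lemma conjC_complexR (x : R) : (x%:C)^*%R = x%:C :> C.
Proof. exact: conjc_real. Qed.

Lemma sqr_complexR_ge0 (x : R) : 0 <= x%:C ^+ 2 :> C.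
Proof. by rewrite -rmorphXn ler0c sqr_ge0. Qed.

Lemma g_sigma2_ge0 : 0 <= gs.
Proof. by rewrite addr_ge0 ?sqr_complexR_ge0 // mulr_ge0 ?ler0n ?mul_conjC_ge0. Qed.

Lemma g_rho2_ge0 : 0 <= gr.
Proof.
by rewrite !addr_ge0 ?mul_conjC_ge0 //
  mulr_ge0 ?invr_ge0 ?ler0n ?mul_conjC_ge0 ?sqr_complexR_ge0.
Qed.

Lemma g_rhosigma2_real : grs \is Num.real.
Proof.
rewrite CrealE /g_rhosigma2.
rewrite !(rmorph_nat, rmorphD, rmorphN, rmorphM, rmorphXn, fmorphV) /=.
rewrite !conjCK !conjC_complexR.
by apply/eqP; field.
Qed.

Lemma g_rho2sigma2_upper_sos :
  3 * (2 * gr * gs - grrs)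
  = `|-12 * z1 * z2^* - 3 * x1%:C * v2^* + 2 * z1^* * x2%:C| ^+ 2
    + `|3 * z1 * v2^* + 2 * x1%:C * x2%:C + 3 * z1^* * v2| ^+ 2.
Proof.
rewrite !normCK !(rmorph_nat, rmorphD, rmorphN, rmorphM) /= !conjCK !conjC_complexR.
by rewrite /g_sigma2 /g_rho2 /g_rho2sigma2; field.
Qed.

Lemma g_rho2sigma2_lower_sos :
  2 * gr * gs + grrs
  = 4 * `|2 * z2^* * x1%:C - v2^* * z1^*| ^+ 2
    + `|-4 * z2^* * z1 + v2^* * x1%:C - 2 * x2%:C * z1^*| ^+ 2
    + 3 * `|v2 * z1^* - v2^* * z1| ^+ 2.
Proof.
rewrite !normCK !(rmorph_nat, rmorphD, rmorphN, rmorphM) /= !conjCK !conjC_complexR.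
by rewrite /g_sigma2 /g_rho2 /g_rho2sigma2; field.
Qed.

Lemma g_rho2sigma2_bounds : - (2 * (gr * gs)) <= grrs <= 2 * (gr * gs).
Proof.
apply/andP; split.
  rewrite -subr_ge0 opprK addrC mulrA g_rho2sigma2_lower_sos.
  by rewrite !addr_ge0 ?mulr_ge0 ?ler0n ?exprn_ge0.
rewrite -subr_ge0 -(@pmulr_rge0 _ 3) ?ltr0n // mulrA g_rho2sigma2_upper_sos.
by rewrite addr_ge0 ?exprn_ge0.
Qed.

Lemma g_rhosigma2_sqr_le : 3 * `|grs| ^+ 2 <= 4 * gr * gs ^+ 2.
Proof.
pose d := [:: 2; 12; 12; 3; 3] : seq C.
pose u := [:: x2%:C; z2; z2^*; v2; v2^*].
pose w := [:: 2 / 3 * (x1%:C ^+ 2 - 2 * (z1 * z1^*)); 4 * z1^* ^+ 2;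
              4 * z1 ^+ 2; 2 * z1^* * x1%:C; 2 * z1 * x1%:C] : seq C.
have d_gt0 (i : 'I_5) : 0 < d`_i by case: i => [[|[|[|[|[|]]]]]] //= _; rewrite ltr0n.
have := weighted_CauchySchwarz (fun i : 'I_5 => u`_i) (fun i => w`_i) d_gt0.
have -> : \sum_(i < 5) u`_i * w`_i = grs.
  by rewrite !big_ord_recl big_ord0 /= /g_rhosigma2; ring.
have -> : \sum_(i < 5) d`_i * `|u`_i| ^+ 2 = 6 * gr.
  by rewrite !big_ord_recl big_ord0 /= !normCK /g_rho2 conjC_complexR !conjCK; field.
have -> : \sum_(i < 5) `|w`_i| ^+ 2 / d`_i = 2 / 9 * gs ^+ 2.
  rewrite !big_ord_recl big_ord0 /= !normCK /g_sigma2.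
  by rewrite !(rmorphM, rmorphB, rmorphXn) /= conjC_complexR !conjCK; field.
have -> : 4 * gr * gs ^+ 2 = 3 * (6 * gr * (2 / 9 * gs ^+ 2)) by field.
by rewrite ler_pM2l ?ltr0n.
Qed.

Lemma g_rhosigma2_norm_le : `|grs| <= (Num.sqrt 2)%:C * (sqrtC gr * gs).
Proof.
have gs_ge0 := g_sigma2_ge0; have gr_ge0 := g_rho2_ge0.
have sqrt2K : (Num.sqrt 2)%:C ^+ 2 = 2 :> C.
  by rewrite -rmorphXn sqr_sqrtr ?ler0n // (rmorph_nat (real_complex R)).
rewrite -ler_sqr ?nnegrE ?normr_ge0 ?mulr_ge0 ?ler0c ?sqrtr_ge0 ?sqrtC_ge0 //.
rewrite !exprMn sqrt2K sqrtCK -(@ler_pM2l _ 3) ?ltr0n //.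
apply: (le_trans g_rhosigma2_sqr_le).
have -> : 3 * (2 * (gr * gs ^+ 2)) = 6 * (gr * gs ^+ 2) by ring.
by rewrite -mulrA ler_wpM2r ?mulr_ge0 ?exprn_ge0 ?ler_nat.
Qed.
End Invariants.

Lemma pdivr_between (F : numFieldType) (c p g : F) :
  0 < p -> - (c * p) <= g <= c * p -> - c <= g / p <= c.
Proof. by move=> p_gt0; rewrite ler_pdivlMr // ler_pdivrMr // mulNr. Qed.

Lemma two_le_sqrt7_5_mul_sqrt15_pm1 (R : rcfType) :
  2 <= Num.sqrt (7 / 5 : R) * (Num.sqrt 15 - 1) /\
  2 <= Num.sqrt (7 / 5 : R) * (Num.sqrt 15 + 1).
Proof.
have t_ge0 : 0 <= Num.sqrt (7 / 5 : R) by apply: sqrtr_ge0.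
have s_ge0 : 0 <= Num.sqrt (15 : R) by apply: sqrtr_ge0.
have tK : Num.sqrt (7 / 5 : R) ^+ 2 = 7 / 5 by rewrite sqr_sqrtr // divr_ge0 ?ler0n.
have sK : Num.sqrt (15 : R) ^+ 2 = 15 by rewrite sqr_sqrtr // ler0n.
have t_ge1 : 1 <= Num.sqrt (7 / 5 : R) by nra.
have s_ge3 : 3 <= Num.sqrt (15 : R) by nra.
split; nra.
Qed.

Theorem mainTheorem2 (R : rcfType) (x1 x2 : R) (z1 z2 v2 : R[i]) :
  let gs := g_sigma2 x1 z1 in
  let gr := g_rho2 x2 z2 v2 in
  let grs := g_rhosigma2 x1 x2 z1 z2 v2 in
  let grrs := g_rho2sigma2 x1 x2 z1 z2 v2 in
  0 <= gs /\ 0 <= gr /\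
  (gs * gr != 0 ->
     (- (Num.sqrt (2 : R))%:C <= grs / (sqrtC gr * gs) <= (Num.sqrt (2 : R))%:C)
     /\
     (- (Num.sqrt (7 / 5 : R) * (Num.sqrt (15 : R) - 1))%:C
        <= grrs / (gr * gs)
        <= (Num.sqrt (7 / 5 : R) * (Num.sqrt (15 : R) + 1))%:C)).
Proof.
move=> gs gr grs grrs.
have gs_ge0 : 0 <= gs := g_sigma2_ge0 x1 z1.
have gr_ge0 : 0 <= gr := g_rho2_ge0 x2 z2 v2.
split=> //; split=> // /[!mulf_eq0] /norP[gs_neq0 gr_neq0].
have gs_gt0 : 0 < gs by rewrite lt_def gs_neq0.
have gr_gt0 : 0 < gr by rewrite lt_def gr_neq0.
split.
  apply: pdivr_between; first by rewrite mulr_gt0 ?sqrtC_gt0.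
  by rewrite -real_ler_norml ?g_rhosigma2_real ?g_rhosigma2_norm_le.
have [lo hi] := two_le_sqrt7_5_mul_sqrt15_pm1 R.
have /andP[grrs_lo grrs_hi] := pdivr_between (mulr_gt0 gr_gt0 gs_gt0)
  (g_rho2sigma2_bounds x1 x2 z1 z2 v2).
have two_leC (c : R) : 2 <= c -> 2 <= c%:C.
  by move=> c_ge2; rewrite -(rmorph_nat (real_complex R) 2) lecR.
apply/andP; split.
  by apply: le_trans grrs_lo; rewrite lerN2 two_leC.
by apply: (le_trans grrs_hi); rewrite two_leC.
Qed.
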